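(* Let $(G,\mathcal{P})$, $(H,\mathcal{Q})$ be group pairs with finite generating sets $S$ of $G$ and $T$ of $H$, and let $f=(f_1,f_2)\colon(G,\mathcal{P})\to(H,\mathcal{Q})$ be an $(L,C,M)$-Lipschitz map of pairs. (i) For all $\alpha,\alpha'\in\mathbb{N}$ with $\alpha'\ge L\alpha+C+M$, there is a simplicial map $f_*\colon\hat R_\alpha(G,\mathcal{P},S)\to\hat R_{\alpha'}(H,\mathcal{Q},T)$ given on vertices by $f_1\sqcup f_2$. (ii) Let $r\colon(H,\mathcal{Q})\to(G,\mathcal{P})$ be an $(L,C,M)$-Lipschitz map of pairs such that $(f,r)$ is an $(L,C,M)$-quasi-retraction of pairs. For all $\alpha,\alpha',\beta,\beta'\in\mathbb{N}$ with $\alpha'\ge L\alpha+C+M$, $\beta'\ge\alpha'$, $\beta\ge L\beta'+2C+M$, the composite $\hat R_\alpha(G,\mathcal{P},S)\xrightarrow{f_*}\hat R_{\alpha'}(H,\mathcal{Q},T)\hookrightarrow\hat R_{\beta'}(H,\mathcal{Q},T)\xrightarrow{r_*}\hat R_\beta(G,\mathcal{P},S)$ is simplicially homotopic to the inclusion $\hat R_\alpha(G,\mathcal{P},S)\hookrightarrow\hat R_\beta(G,\mathcal{P},S)$. In particular, for every $i\in\mathbb{N}$, if $(H_i(\hat R_{\alpha'}(H,\mathcal{Q},T);\mathbb{Z}))_{\alpha'\in\mathbb{N}}$ is essentially trivial, then $(H_i(\hat R_\alpha(G,\mathcal{P},S);\mathbb{Z}))_{\alpha\in\mathbb{N}}$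 is essentially trivial.
   Context: A group pair $(G,\mathcal{P})$: $G$ finitely generated, $\mathcal{P}$ a non-empty finite collection of subgroups (repetitions allowed); $G/\mathcal{P}=\coprod_{P\in\mathcal{P}}G/P$, elements viewed as cosets (subsets of $G$). $d_S$ is the word metric. $f$ is $(L,C)$-Lipschitz if $d(f(x),f(x'))\le L\,d(x,x')+C$. For $L\ge1,C\ge0,M\ge0$, an $(L,C,M)$-Lipschitz map of pairs $f=(f_1,f_2)$ is an $(L,C)$-Lipschitz $f_1\colon G\to H$ and a function $f_2\colon G/\mathcal{P}\to H/\mathcal{Q}$ with Hausdorff distance between $f_1(A)$ and $f_2(A)$ less than $M$ for all $A$. $(f,r)$ is an $(L,C,M)$-quasi-retraction of pairs if moreover $d_G(r_1f_1(g),g)\le C$ for all $g\in G$ and $r_2\circ f_2=\mathrm{id}_{G/\mathcal{P}}$ (with $r_*$ the simplicial map of part (i) for $r$). Elements of $G/\mathcal{P}$ are cone vertices. A finite $U\subseteq G\sqcup G/\mathcal{P}$ is a unicone subset of diameter $\le\alpha$ if $U\cap G$ has $d_S$-diameter $\le\alpha$ and $U$ contains at most one cone vertex $A$, in which case every $g\in U\cap G$ has $a\in A$ with $d_S(g,a)\le\alpha$. $\hat R_\alpha(G,\mathcal{P},S)$ is the simplicial complex whose simplices are these subsets; for $\beta\ge\alpha$ it is a subcomplex of $\hat R_\beta$. A directed system of groups is essentially trivial if each $H_\alpha$ maps trivially to some $H_\beta$, $\beta\ge\alpha$. *)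

From mathcomp Require Import all_boot all_order all_algebra.
From mathcomp Require Import boolp reals.
From Stdlib Require List.
Set Implicit Arguments. Unset Strict Implicit. Unset Printing Implicit Defensive.
Import Order.TTheory GRing.Theory Num.Theory.
Local Open Scope ring_scope.

Record group := Group {
  gcar :> Type;
  gmul : gcar -> gcar -> gcar;
  ginv : gcar -> gcar;
  gone : gcar;
  gmulA : forall x y z, gmul x (gmul y z) = gmul (gmul x y) z;
  gmul1 : forall x, gmul gone x = x;
  gmulV : forall x, gmul (ginv x) x = gone }.

Definition is_subgroup (G : group) (P : G -> Prop) : Prop :=
  [/\ P (gone G), (forall x y, P x -> P y -> P (gmul x y))
    & (forall x, P x -> P (ginv x))].

Definition wlen_le (G : group) (S : seq G) (n : nat) (g : G) : Prop :=
  exists w : seq G, [/\ (size w <= n)%N,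
    (forall s, List.In s w -> List.In s S \/ List.In (ginv s) S)
    & foldr (@gmul G) (gone G) w = g].

Definition generates (G : group) (S : seq G) : Prop :=
  forall g, exists n, wlen_le S n g.

(* word length: least n with wlen_le S n g (0 if none exists; irrelevant
   when S generates) *)
Definition wordlen (G : group) (S : seq G) (g : G) : nat :=
  match pselect (exists n, asbool (wlen_le S n g)) with
  | left h => ex_minn h
  | right _ => 0%N
  end.

Definition dS (G : group) (S : seq G) (g h : G) : nat := wordlen S (gmul (ginv g) h).

(* a non-empty finite family P_0, ..., P_n of subgroups (repetitions allowed) *)
Record gpair := GPair {
  pgrp : group;
  pn : nat;
  psub : 'I_pn.+1 -> pgrp -> Prop;
  psubP : forall i, is_subgroup (psub i) }.

Definition lcoset (G : group) (P : G -> Prop) (g : G) : G -> Prop :=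
  fun x => P (gmul (ginv g) x).

(* G/𝒫 = ⨆_i G/P_i : an index i together with a left coset of P_i *)
Definition coset_vertex (X : gpair) : Type :=
  { i : 'I_(pn X).+1 &
    { A : pgrp X -> Prop | exists g, A = lcoset (@psub X i) g } }.

Definition cset (X : gpair) (A : coset_vertex X) : pgrp X -> Prop :=
  sval (projT2 A).

Definition vert (X : gpair) : Type := (pgrp X + coset_vertex X)%type.

Section Lip.
Variable R : realType.

Definition lipschitz (G H : group) (S : seq G) (T : seq H) (L C : R)
  (f : G -> H) : Prop :=
  forall x x', (dS T (f x) (f x'))%:R <= L * (dS S x x')%:R + C.

Definition image_set (G H : group) (f : G -> H) (A : G -> Prop) : H -> Prop :=
  fun y => exists a, A a /\ y = f a.

Definition hausdorff_lt (H : group) (T : seq H) (X Y : H -> Prop) (M : R) : Prop :=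
  exists e : R, [/\ e < M,
    (forall x, X x -> exists y, Y y /\ (dS T x y)%:R <= e)
    & (forall y, Y y -> exists x, X x /\ (dS T y x)%:R <= e)].

Definition lip_pair (X Y : gpair) (S : seq (pgrp X)) (T : seq (pgrp Y))
  (L C M : R) (f1 : pgrp X -> pgrp Y) (f2 : coset_vertex X -> coset_vertex Y) : Prop :=
  [/\ 1 <= L, 0 <= C, 0 <= M, lipschitz S T L C f1
    & forall A, hausdorff_lt T (image_set f1 (cset A)) (cset (f2 A)) M].

Definition quasi_retraction (X Y : gpair) (S : seq (pgrp X)) (T : seq (pgrp Y))
  (L C M : R)
  (f1 : pgrp X -> pgrp Y) (f2 : coset_vertex X -> coset_vertex Y)
  (r1 : pgrp Y -> pgrp X) (r2 : coset_vertex Y -> coset_vertex X) : Prop :=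
  [/\ lip_pair S T L C M f1 f2, lip_pair T S L C M r1 r2,
    (forall g, (dS S (r1 (f1 g)) g)%:R <= C)
    & (forall A, r2 (f2 A) = A)].
End Lip.

(** * The complexes \hat R_alpha(G,𝒫,S); simplices are finite subsets, given by lists *)
Definition Rhat (X : gpair) (S : seq (pgrp X)) (alpha : nat) (U : seq (vert X)) : Prop :=
  [/\ (forall g h, List.In (inl g) U -> List.In (inl h) U -> (dS S g h <= alpha)%N),
      (forall A B, List.In (inr A) U -> List.In (inr B) U -> A = B)
    & (forall A g, List.In (inr A) U -> List.In (inl g) U ->
         exists a, cset A a /\ (dS S g a <= alpha)%N)].

Definition vmap (X Y : gpair) (f1 : pgrp X -> pgrp Y)
  (f2 : coset_vertex X -> coset_vertex Y) (v : vert X) : vert Y :=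
  match v with inl g => inl (f1 g) | inr A => inr (f2 A) end.

Section Simp.
Variables V W : Type.
Variables (K : seq V -> Prop) (K' : seq W -> Prop).

Definition simplicial (phi : V -> W) : Prop :=
  forall U, K U -> K' (map phi U).

Definition contiguous (phi psi : V -> W) : Prop :=
  forall U, K U -> K' (map phi U ++ map psi U).

(* equivalence relation generated by contiguity on simplicial maps K -> K' *)
Inductive simp_homotopic : (V -> W) -> (V -> W) -> Prop :=
| sh_refl phi : simplicial phi -> simp_homotopic phi phi
| sh_step phi psi chi : simplicial phi -> contiguous phi psi ->
    simp_homotopic psi chi -> simp_homotopic phi chi.
End Simp.

(** * Simplicial homology with Z coefficients (ordered chain complex) *)
Section Homology.
Variable V : Type.

(* a chain is a formal Z-linear combination of ordered tuples of vertices *)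
Definition chain := seq (int * seq V).

Definition coef (c : chain) (t : seq V) : int :=
  \sum_(p <- c) (if asbool (p.2 = t) then p.1 else 0).

Definition face (j : nat) (s : seq V) : seq V := take j s ++ drop j.+1 s.

Definition bdry (c : chain) : chain :=
  flatten [seq [seq ((-1) ^+ j * p.1, face j p.2) | j <- iota 0 (size p.2)] | p <- c].

Definition chain_in (K : seq V -> Prop) (i : nat) (c : chain) : Prop :=
  forall p, List.In p c -> size p.2 = i.+1 /\ K p.2.

(* i-cycles (the boundary map in degree 0 is zero) *)
Definition is_cycle (K : seq V -> Prop) (i : nat) (c : chain) : Prop :=
  chain_in K i c /\ ((0 < i)%N -> forall t, coef (bdry c) t = 0).

Definition is_boundary (K : seq V -> Prop) (i : nat) (c : chain) : Prop :=
  exists d, chain_in K i.+1 d /\ forall t, coef (bdry d) t = coef c t.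

(* (H_i(K_alpha;Z))_alpha, with maps induced by the inclusions K_alpha ⊆ K_beta,
   is essentially trivial: every H_i(K_a) maps to zero in some H_i(K_b), b >= a *)
Definition ess_trivial_H (K : nat -> seq V -> Prop) (i : nat) : Prop :=
  forall a, exists b, (a <= b)%N /\
    forall c, is_cycle (K a) i c -> is_boundary (K b) i c.
End Homology.

(* Part (i) is the triangle inequality: f1 stretches the diameter of a simplex
   from alpha to at most L alpha + C, and a point within alpha of a coset A is
   sent within L alpha + C + M of the coset f2 A.  For part (ii), r1 (f1 g) lies
   within C of g and r2 (f2 A) = A, so for every simplex U of R_alpha the union
   of U and its image under r o f is a simplex of R_beta: r o f is contiguous to
   the inclusion, hence simplicially homotopic to it.  Contiguous maps are chain
   homotopic through the prism operator, so every cycle c of R_alpha is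
   homologous in R_beta to r_* f_* c, which bounds as soon as f_* c bounds in
   R_beta'. *)

From mathcomp Require Import all_boot all_order all_algebra.
From mathcomp Require Import boolp reals.
From mathcomp Require Import lra zify.
From Stdlib Require List.
Set Implicit Arguments. Unset Strict Implicit. Unset Printing Implicit Defensive.
Import Order.TTheory GRing.Theory Num.Theory.
Local Open Scope ring_scope.

Lemma In_rev (T : Type) (s : seq T) (x : T) : List.In x (rev s) -> List.In x s.
Proof.
elim: s => [|a s IH] //; rewrite rev_cons -cats1 => /List.in_app_iff[/IH|[<-|]] //.
- by right.
- by left.
Qed.

Section GroupFacts.
Variable G : group.

Lemma gmulVr (x : G) : gmul x (ginv x) = gone G.
Proof.
transitivity (gmul (gmul (ginv (ginv x)) (ginv x)) (gmul x (ginv x))).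
  by rewrite gmulV gmul1.
by rewrite -gmulA (gmulA (ginv x) x) gmulV gmul1 gmulV.
Qed.

Lemma gmulr1 (x : G) : gmul x (gone G) = x.
Proof. by rewrite -(gmulV x) gmulA gmulVr gmul1. Qed.

Lemma gmulKV (x y : G) : gmul (ginv x) (gmul x y) = y.
Proof. by rewrite gmulA gmulV gmul1. Qed.

Lemma ginvK (x : G) : ginv (ginv x) = x.
Proof. by rewrite -[RHS](gmulKV (ginv x)) gmulV gmulr1. Qed.

Lemma ginvM (x y : G) : ginv (gmul x y) = gmul (ginv y) (ginv x).
Proof.
rewrite -[RHS](gmulKV (gmul x y)).
by rewrite -(gmulA x y) (gmulA y) gmulVr gmul1 gmulVr gmulr1.
Qed.

End GroupFacts.

Section WordMetric.
Variables (G : group) (S : seq G).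

Local Notation prodw := (foldr (@gmul G) (gone G)).

Lemma prodw_cat (w1 w2 : seq G) : prodw (w1 ++ w2) = gmul (prodw w1) (prodw w2).
Proof. by elim: w1 => [|a w IH] /=; rewrite ?gmul1 // IH gmulA. Qed.

Lemma prodw_rev_inv (w : seq G) : prodw (rev (map (@ginv G) w)) = ginv (prodw w).
Proof.
elim: w => [|a w IH] /=; first by rewrite -[ginv _]gmulr1 gmulV.
by rewrite rev_cons -cats1 prodw_cat IH /= gmulr1 ginvM.
Qed.

Lemma wlen_le_inv n x : wlen_le S n x -> wlen_le S n (ginv x).
Proof.
case=> w [hs hin <-]; exists (rev (map (@ginv G) w)); split.
- by rewrite size_rev size_map.
- move=> y /(@In_rev _ _ y) /List.in_map_iff [a [<- ha]].
  have := hin a ha.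
  by rewrite ginvK => -[]; [right|left].
- exact: prodw_rev_inv.
Qed.

Lemma wlen_le_mul n m x y :
  wlen_le S n x -> wlen_le S m y -> wlen_le S (n + m) (gmul x y).
Proof.
case=> w1 [h1 i1 <-] [w2 [h2 i2 <-]]; exists (w1 ++ w2); split.
- by rewrite size_cat leq_add.
- by move=> s /List.in_app_iff [/i1|/i2].
- exact: prodw_cat.
Qed.

Lemma wordlen_leq n x : wlen_le S n x -> (wordlen S x <= n)%N.
Proof.
move=> hn; rewrite /wordlen; case: pselect => [h|h].
  by case: ex_minnP => m _; apply; apply/asboolP.
by exfalso; apply: h; exists n; apply/asboolP.
Qed.

Hypothesis hS : generates S.

Lemma wlen_le_wordlen x : wlen_le S (wordlen S x) x.
Proof.
rewrite /wordlen; case: pselect => [h|h].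
  by case: ex_minnP => m /asboolP.
by exfalso; apply: h; have [n hn] := hS x; exists n; apply/asboolP.
Qed.

Lemma dS_triangle x y z : (dS S x z <= dS S x y + dS S y z)%N.
Proof.
apply: wordlen_leq.
have -> : gmul (ginv x) z = gmul (gmul (ginv x) y) (gmul (ginv y) z).
  by rewrite -gmulA (gmulA y) gmulVr gmul1.
exact/wlen_le_mul/wlen_le_wordlen/wlen_le_wordlen.
Qed.

Lemma dS_sym x y : dS S x y = dS S y x.
Proof.
have dS_le a b : (dS S a b <= dS S b a)%N.
  apply: wordlen_leq.
  have -> : gmul (ginv a) b = ginv (gmul (ginv b) a) by rewrite ginvM ginvK.
  exact/wlen_le_inv/wlen_le_wordlen.
by apply/eqP; rewrite eqn_leq !dS_le.
Qed.

End WordMetric.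

Lemma natr_dS_triangle (R : numDomainType) (G : group) (S : seq G) : generates S ->
  forall x y z, (dS S x z)%:R <= (dS S x y)%:R + (dS S y z)%:R :> R.
Proof. by move=> hS x y z; rewrite -natrD ler_nat dS_triangle. Qed.

Lemma exists_nat_ge (R : archiFieldType) (x : R) : exists n : nat, x <= n%:R.
Proof. by exists (Num.trunc x).+1; apply/ltW/truncnS_gt. Qed.

Lemma lipschitz_dS_le (R : realType) (G H : group) (S : seq G) (T : seq H)
    (L C : R) (f : G -> H) (a : nat) x x' :
  0 <= L -> lipschitz S T L C f -> (dS S x x' <= a)%N ->
  (dS T (f x) (f x'))%:R <= L * a%:R + C.
Proof.
move=> L0 hf hxa; apply: le_trans (hf x x') _.
by rewrite lerD2r ler_wpM2l // ler_nat.
Qed.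

Definition face_closed {V : Type} (K : seq V -> Prop) : Prop :=
  forall U U', (forall v, List.In v U' -> List.In v U) -> K U -> K U'.

Lemma Rhat_face_closed (X : gpair) (S : seq (pgrp X)) a : face_closed (Rhat S a).
Proof.
move=> U U' hs [h1 h2 h3]; split.
- by move=> g h /hs hg /hs hh; apply: h1.
- by move=> A B /hs hA /hs hB; apply: h2.
- by move=> A g /hs hA /hs hg; apply: h3.
Qed.

Section VertexMap.
Variables (X Y : gpair) (f1 : pgrp X -> pgrp Y) (f2 : coset_vertex X -> coset_vertex Y).

Lemma In_vmap_inl U y :
  List.In (inl y) (map (vmap f1 f2) U) -> exists2 g, List.In (inl g) U & y = f1 g.
Proof. by case/List.in_map_iff => -[g|A] [] //= [<-]; exists g. Qed.

Lemma In_vmap_inr U B :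
  List.In (inr B) (map (vmap f1 f2) U) -> exists2 A, List.In (inr A) U & B = f2 A.
Proof. by case/List.in_map_iff => -[g|A] [] //= [<-]; exists A. Qed.

End VertexMap.

Lemma simplicial_vmap (R : realType) (X Y : gpair)
    (S : seq (pgrp X)) (T : seq (pgrp Y)) (hT : generates T) (L C M : R)
    f1 f2 (alpha alpha' : nat) :
  lip_pair S T L C M f1 f2 -> L * alpha%:R + C + M <= alpha'%:R ->
  simplicial (Rhat S alpha) (Rhat T alpha') (vmap f1 f2).
Proof.
case=> L1 C0 M0 hlip hhaus halpha U [h1 h2 h3].
have L0 : 0 <= L by apply: le_trans L1.
split.
- move=> _ _ /In_vmap_inl [g hg ->] /In_vmap_inl [h hh ->].
  rewrite -(ler_nat R); have := lipschitz_dS_le L0 hlip (h1 g h hg hh); lra.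
- move=> _ _ /In_vmap_inr [A hA ->] /In_vmap_inr [B hB ->].
  by rewrite (h2 A B hA hB).
- move=> _ _ /In_vmap_inr [A hA ->] /In_vmap_inl [h hh ->].
  have [a [ha hha]] := h3 A h hA hh.
  have [e [he himg _]] := hhaus A.
  have [y [hy hay]] := himg (f1 a) (ex_intro _ a (conj ha erefl)).
  exists y; split => //; rewrite -(ler_nat R).
  have := natr_dS_triangle R hT (f1 h) (f1 a) y.
  have := lipschitz_dS_le L0 hlip hha; lra.
Qed.

Section Retraction.
Variables (R : realType) (X Y : gpair) (S : seq (pgrp X)) (T : seq (pgrp Y)).
Variables (L C M : R) (f1 : pgrp X -> pgrp Y) (f2 : coset_vertex X -> coset_vertex Y).
Variables (r1 : pgrp Y -> pgrp X) (r2 : coset_vertex Y -> coset_vertex X).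
Hypotheses (hS : generates S) (hq : quasi_retraction S T L C M f1 f2 r1 r2).
Variables (alpha alpha' beta beta' : nat).
Hypotheses (halpha : L * alpha%:R + C + M <= alpha'%:R) (hbeta' : (alpha' <= beta')%N).
Hypothesis hbeta : L * beta'%:R + 2 * C + M <= beta%:R.

Let L1 : 1 <= L. Proof. by case: hq => -[]. Qed.
Let L0 : 0 <= L. Proof. exact: le_trans ler01 L1. Qed.
Let C0 : 0 <= C. Proof. by case: hq => -[]. Qed.
Let M0 : 0 <= M. Proof. by case: hq => -[]. Qed.

Lemma alphaD_C_le_beta : alpha%:R + C <= beta%:R.
Proof.
have : alpha%:R <= L * alpha%:R by rewrite ler_peMl.
have : beta'%:R <= L * beta'%:R by rewrite ler_peMl.
have : alpha'%:R <= beta'%:R :> R by rewrite ler_nat.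
have := halpha; have := hbeta; have := C0; have := M0; lra.
Qed.

Lemma alpha_le_beta : (alpha <= beta)%N.
Proof. by rewrite -(ler_nat R); have := alphaD_C_le_beta; have := C0; lra. Qed.

Lemma dS_retraction_l g h : (dS S g h <= alpha)%N -> (dS S (r1 (f1 g)) h <= beta)%N.
Proof.
move=> hgh; case: hq => _ _ hrf _.
have := hrf g; have := natr_dS_triangle R hS (r1 (f1 g)) g h; have := alphaD_C_le_beta.
move: hgh; rewrite -!(ler_nat R); lra.
Qed.

Lemma dS_retraction g h :
  (dS S g h <= alpha)%N -> (dS S (r1 (f1 g)) (r1 (f1 h)) <= beta)%N.
Proof.
case: hq => -[_ _ _ hf _] [_ _ _ hr _] _ _ hgh.
have hfgh : (dS T (f1 g) (f1 h) <= beta')%N.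
  apply: leq_trans hbeta'; rewrite -(ler_nat R).
  have := lipschitz_dS_le L0 hf hgh; have := halpha; have := M0; lra.
rewrite -(ler_nat R); have := lipschitz_dS_le L0 hr hfgh.
have := hbeta; have := C0; have := M0; lra.
Qed.

Local Notation rf := (fun v => vmap r1 r2 (vmap f1 f2 v)).

Lemma In_retraction_cat U v : List.In v (map rf U ++ map id U) ->
  List.In v U \/ exists2 g, List.In (inl g) U & v = inl (r1 (f1 g)).
Proof.
case: hq => _ _ _ hrf2; rewrite map_id.
case/List.in_app_iff => [/List.in_map_iff [[g|A] [<- hU]]|]; [right|left|left] => //.
- by exists g.
- by rewrite /= hrf2.
Qed.

Lemma contiguous_retraction : contiguous (Rhat S alpha) (Rhat S beta) rf id.
Proof.
move=> U [u1 u2 u3]; split.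
- move=> x y /In_retraction_cat [hx|[g hg [->]]] /In_retraction_cat [hy|[h hh [->]]].
  + exact: leq_trans (u1 x y hx hy) alpha_le_beta.
  + by rewrite dS_sym //; apply: dS_retraction_l; apply: u1.
  + exact/dS_retraction_l/u1.
  + exact/dS_retraction/u1.
- by move=> A B /In_retraction_cat [hA|[]//] /In_retraction_cat [hB|[]//]; apply: u2.
- move=> A x /In_retraction_cat [hA|[]//] /In_retraction_cat [hx|[g hg [->]]].
  + have [a [ha hxa]] := u3 A x hA hx.
    by exists a; split => //; apply: leq_trans hxa alpha_le_beta.
  + have [a [ha hga]] := u3 A g hA hg.
    by exists a; split => //; apply: dS_retraction_l.
Qed.

End Retraction.

Section Chains.
Variable V : Type.
Implicit Types (c d : chain V) (g h : seq V -> int) (s t : seq V).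

(* Chains are lists with repetitions, compared only through [coef].  Since
   [coef c t = evalc (indc t) c], identities between chains are proved by
   evaluating arbitrary integer cochains g on them. *)
Definition evalc g c : int := \sum_(p <- c) p.1 * g p.2.

Definition indc t s : int := if `[< s = t >] then 1 else 0.

Definition bdry1 s : chain V := [seq ((-1) ^+ j, face j s) | j <- iota 0 (size s)].

Definition cobdry g s : int := evalc g (bdry1 s).

Definition negcons (x : V) c : chain V := [seq (- q.1, x :: q.2) | q <- c].

Lemma evalc_cons g p c : evalc g (p :: c) = p.1 * g p.2 + evalc g c.
Proof. exact: big_cons. Qed.

Lemma evalc_cat g c d : evalc g (c ++ d) = evalc g c + evalc g d.
Proof. exact: big_cat. Qed.

Lemma eq_evalc g h c : g =1 h -> evalc g c = evalc h c.
Proof. by move=> e; apply: eq_bigr => p _; rewrite e. Qed.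

Lemma evalcB g h c : evalc (fun s => g s - h s) c = evalc g c - evalc h c.
Proof. by rewrite /evalc -sumrB; apply: eq_bigr => p _; rewrite mulrBr. Qed.

Lemma evalc_eq0_In g c : (forall p, List.In p c -> g p.2 = 0) -> evalc g c = 0.
Proof.
elim: c => [|p c IH] hc; first exact: big_nil.
rewrite evalc_cons hc ?mulr0 ?add0r; first by apply: IH => q hq; apply: hc; right.
by left.
Qed.

Lemma coef_evalc c t : coef c t = evalc (indc t) c.
Proof. by apply: eq_bigr => p _; rewrite /indc; case: asboolP; rewrite ?mulr1 ?mulr0. Qed.

Lemma evalc_negcons g x c : evalc g (negcons x c) = - evalc (fun s => g (x :: s)) c.
Proof. by rewrite /evalc big_map -sumrN; apply: eq_bigr => q _; rewrite mulNr. Qed.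

Lemma bdry1_cons x s : bdry1 (x :: s) = (1, s) :: negcons x (bdry1 s).
Proof.
rewrite /bdry1 /negcons /= (iotaDl 1 0) -!map_comp /face /= drop0; congr (_ :: _).
by apply: eq_map => j /=; rewrite add1n exprS mulN1r.
Qed.

Lemma cobdry_cons g x s : cobdry g (x :: s) = g s - cobdry (fun u => g (x :: u)) s.
Proof. by rewrite /cobdry bdry1_cons evalc_cons evalc_negcons mul1r. Qed.

Lemma evalc_eq0 g c : (forall t, coef c t = 0) -> evalc g c = 0.
Proof.
move: {-1}(size c) (leqnn (size c)) => n; elim: n c => [|n IH] [|p c] //= hs hc;
  try exact: big_nil.
(* The terms on the tuple p.2 contribute coef c p.2 * g p.2 = 0; drop them. *)
pose same := fun q : int * seq V => `[< q.2 = p.2 >].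
rewrite /evalc (bigID same) /=.
have -> : \sum_(q <- p :: c | same q) q.1 * g q.2 = coef (p :: c) p.2 * g p.2.
  rewrite /coef big_mkcond mulr_suml; apply: eq_bigr => q _.
  by rewrite /same; case: asboolP => [->|]; rewrite ?mul0r.
rewrite hc mul0r add0r -big_filter; apply: IH.
  by rewrite /= /same asboolT //= size_filter (leq_trans (count_size _ _)).
move=> t; rewrite /coef big_filter.
case: (asboolP (t = p.2)) => [->|ht].
  by rewrite big1 // => q /asboolPn nq; rewrite asboolF.
have := hc t; rewrite /coef (bigID same) /= [X in X + _]big1 ?add0r // => q /asboolP e.
by rewrite asboolF // => et; apply: ht; rewrite -et.
Qed.

Definition oppc c : chain V := [seq (- q.1, q.2) | q <- c].

Lemma evalc_oppc g c : evalc g (oppc c) = - evalc g c.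
Proof. by rewrite /evalc big_map -sumrN; apply: eq_bigr => q _; rewrite mulNr. Qed.

Lemma eq_evalc_coef g c d : (forall t, coef c t = coef d t) -> evalc g c = evalc g d.
Proof.
move=> hcd; apply/eqP; rewrite -subr_eq0 -evalc_oppc -evalc_cat; apply/eqP/evalc_eq0 => t.
by rewrite coef_evalc evalc_cat evalc_oppc -!coef_evalc hcd subrr.
Qed.

End Chains.

Section LinearExtension.
Variables (V W : Type) (F : seq V -> chain W).

Definition linext (c : chain V) : chain W :=
  flatten [seq [seq (q.1 * p.1, q.2) | q <- F p.2] | p <- c].

Lemma evalc_linext g c : evalc g (linext c) = evalc (fun s => evalc g (F s)) c.
Proof.
elim: c => [|p c IH]; first by rewrite /evalc !big_nil.
rewrite /linext /= evalc_cat IH evalc_cons; congr (_ + _).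
rewrite /evalc big_map mulr_sumr; apply: eq_bigr => q _ /=.
by rewrite mulrCA mulrA.
Qed.

Lemma In_linext c q :
  List.In q (linext c) ->
  exists2 p, List.In p c & exists2 r, List.In r (F p.2) & q.2 = r.2.
Proof.
elim: c => [|p c IH] //= /List.in_app_iff [/List.in_map_iff [r [<- hr]]|/IH [p' hp' h]].
  by exists p; [left | exists r].
by exists p'; [right|].
Qed.

End LinearExtension.

Lemma bdry_linext (V : Type) (c : chain V) : bdry c = linext (@bdry1 V) c.
Proof. by congr flatten; apply: eq_map => p; rewrite -map_comp. Qed.

Lemma evalc_bdry (V : Type) g (c : chain V) : evalc g (bdry c) = evalc (cobdry g) c.
Proof. by rewrite bdry_linext evalc_linext. Qed.

Section ChainMap.
Variables (V W : Type) (phi : V -> W).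
Implicit Types (c : chain V) (g : seq W -> int).

Definition mapc c : chain W := [seq (p.1, map phi p.2) | p <- c].

Lemma evalc_mapc g c : evalc g (mapc c) = evalc (fun s => g (map phi s)) c.
Proof. exact: big_map. Qed.

Lemma face_map j s : face j (map phi s) = map phi (face j s).
Proof. by rewrite /face map_cat map_take map_drop. Qed.

Lemma bdry_mapc c : bdry (mapc c) = mapc (bdry c).
Proof.
rewrite /bdry /mapc map_flatten -!map_comp; congr flatten; apply: eq_map => p /=.
by rewrite size_map -map_comp; apply: eq_map => j /=; rewrite face_map.
Qed.

Lemma cobdry_map g s : cobdry g (map phi s) = cobdry (fun u => g (map phi u)) s.
Proof.
rewrite /cobdry -evalc_mapc; congr evalc.
rewrite /bdry1 /mapc size_map -map_comp.
by apply: eq_map => j /=; rewrite face_map.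
Qed.

Lemma chain_in_mapc (K : seq V -> Prop) (K' : seq W -> Prop) i c :
  simplicial K K' phi -> chain_in K i c -> chain_in K' i (mapc c).
Proof.
move=> hphi hc _ /List.in_map_iff [p [<- hp]] /=.
by have [hs hK] := hc p hp; rewrite size_map; split => //; apply: hphi.
Qed.

Lemma is_cycle_mapc (K : seq V -> Prop) (K' : seq W -> Prop) i c :
  simplicial K K' phi -> is_cycle K i c -> is_cycle K' i (mapc c).
Proof.
move=> hphi [hc hcyc]; split; first exact: chain_in_mapc hc.
move=> i0 t; rewrite bdry_mapc coef_evalc evalc_mapc; exact/evalc_eq0/hcyc.
Qed.

Lemma is_boundary_mapc (K : seq V -> Prop) (K' : seq W -> Prop) i c :
  simplicial K K' phi -> is_boundary K i c -> is_boundary K' i (mapc c).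
Proof.
move=> hphi [d [hd hbd]]; exists (mapc d); split; first exact: chain_in_mapc hd.
by move=> t; rewrite bdry_mapc !coef_evalc !evalc_mapc; apply: eq_evalc_coef.
Qed.

End ChainMap.

Lemma mapc_id (V : Type) (c : chain V) : mapc id c = c.
Proof. by rewrite /mapc -[RHS]map_id; apply: eq_map => -[a s]; rewrite map_id. Qed.

Lemma mapc_comp (U V W : Type) (phi : U -> V) (rho : V -> W) (c : chain U) :
  mapc rho (mapc phi c) = mapc (rho \o phi) c.
Proof. by rewrite /mapc -map_comp; apply: eq_map => p /=; rewrite map_comp. Qed.

Section Prism.
Variables (V W : Type) (phi psi : V -> W).

Fixpoint prism (s : seq V) : chain W :=
  if s is v :: s' then (1, phi v :: psi v :: map psi s') :: negcons (phi v) (prism s')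
  else [::].

Lemma evalc_prism_cons g v s :
  evalc g (prism (v :: s)) =
  g (phi v :: psi v :: map psi s) - evalc (fun u => g (phi v :: u)) (prism s).
Proof. by rewrite /= evalc_cons evalc_negcons mul1r. Qed.

(* The chain homotopy identity dP + Pd = psi - phi, evaluated on a cochain g. *)
Lemma prism_homotopy s g :
  evalc (cobdry g) (prism s) + evalc (fun u => evalc g (prism u)) (bdry1 s) =
  g (map psi s) - g (map phi s).
Proof.
elim: s g => [|v s IH] g; first by rewrite /evalc !big_nil addr0 subrr.
set gv := fun u => g (phi v :: u).
have Eprism : evalc (fun u => cobdry g (phi v :: u)) (prism s) =
    evalc g (prism s) - evalc (cobdry gv) (prism s).
  by rewrite -evalcB; apply: eq_evalc => u; rewrite cobdry_cons.
have Ebdry : evalc (fun u => evalc g (prism (v :: u))) (bdry1 s) =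
    cobdry (fun u => gv (psi v :: u)) (map psi s)
    - evalc (fun u => evalc gv (prism u)) (bdry1 s).
  by rewrite cobdry_map /cobdry -evalcB; apply: eq_evalc => u; rewrite evalc_prism_cons.
have := IH gv; rewrite evalc_prism_cons bdry1_cons evalc_cons evalc_negcons mul1r.
rewrite !cobdry_cons Eprism Ebdry /gv /=; lia.
Qed.

Lemma In_prism s q : List.In q (prism s) ->
  size q.2 = (size s).+1 /\ forall w, List.In w q.2 -> List.In w (map phi s ++ map psi s).
Proof.
elim: s q => [|v s IH] q //= [<-|/List.in_map_iff [r [<- hr]]] /=.
- split; first by rewrite size_map.
  move=> w [<-|[<-|hw]]; first by left.
    by right; apply/List.in_app_iff; right; left.
  by right; apply/List.in_app_iff; right; right.
- have [hs hv] := IH r hr; split; first by rewrite hs.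
  move=> w [<-|/hv /List.in_app_iff [hw|hw]]; first by left.
    by right; apply/List.in_app_iff; left.
  by right; apply/List.in_app_iff; right; right.
Qed.

End Prism.

Section Contiguity.
Variables (V W : Type) (K : seq V -> Prop) (K' : seq W -> Prop) (phi psi : V -> W).
Hypotheses (hK' : face_closed K') (hcont : contiguous K K' phi psi).

Lemma contiguous_simp_homotopic : simp_homotopic K K' phi psi.
Proof.
have hphi : simplicial K K' phi.
  by move=> U hU; apply: hK' (hcont hU) => v hv; apply/List.in_app_iff; left.
have hpsi : simplicial K K' psi.
  by move=> U hU; apply: hK' (hcont hU) => v hv; apply/List.in_app_iff; right.
exact: sh_step hphi hcont (sh_refl hpsi).
Qed.

Lemma contiguous_homologous i c : is_cycle K i c ->
  exists d, chain_in K' i.+1 d /\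
    forall t, coef (bdry d) t = coef (mapc psi c) t - coef (mapc phi c) t.
Proof.
move=> [hc hcyc]; exists (linext (prism phi psi) c); split.
  move=> q /In_linext [p hp [r hr ->]].
  have [hs hK] := hc p hp; have [hrs hrv] := In_prism hr.
  by split; [rewrite hrs hs | apply: hK' hrv (hcont hK)].
move=> t; set g := indc t.
have Pbdry : evalc (fun s => evalc (fun u => evalc g (prism phi psi u)) (bdry1 s)) c = 0.
  (* Pd c = 0: d c = 0 in positive degree, and P maps the empty face to 0. *)
  case: i hc hcyc => [|i] hc hcyc; last by rewrite -evalc_bdry; apply/evalc_eq0/hcyc.
  apply: evalc_eq0_In => p /hc [].
  by case: p.2 => [|v [|]] //= _ _; rewrite /evalc !big_cons !big_nil mul1r.
rewrite !coef_evalc evalc_bdry evalc_linext !evalc_mapc -evalcB -[RHS]subr0 -Pbdry.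
by rewrite -evalcB; apply: eq_evalc => s; rewrite -prism_homotopy addrK.
Qed.

End Contiguity.

Lemma is_boundary_homologous (V : Type) (K : seq V -> Prop) i (c c' d : chain V) :
  chain_in K i.+1 d -> (forall t, coef (bdry d) t = coef c t - coef c' t) ->
  is_boundary K i c' -> is_boundary K i c.
Proof.
move=> hd hdc [d' [hd' hd'c]]; exists (d ++ d'); split.
  by move=> q /List.in_app_iff [/hd|/hd'].
move=> t; have -> : bdry (d ++ d') = bdry d ++ bdry d' by rewrite /bdry map_cat flatten_cat.
by rewrite coef_evalc evalc_cat -!coef_evalc hdc hd'c subrK.
Qed.

Lemma ess_trivial_H_retraction (V W : Type)
    (K : nat -> seq V -> Prop) (K' : nat -> seq W -> Prop)
    (phi : V -> W) (rho : W -> V) i :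
  (forall b, face_closed (K b)) ->
  (forall a, exists a', simplicial (K a) (K' a') phi /\
     forall b', (a' <= b')%N -> exists2 b, (a <= b)%N &
       simplicial (K' b') (K b) rho /\ contiguous (K a) (K b) (fun v => rho (phi v)) id) ->
  ess_trivial_H K' i -> ess_trivial_H K i.
Proof.
move=> hK hretr hess a; have [a' [hphi hb']] := hretr a.
have [b' [ha'b' hbdry]] := hess a'; have [b hab [hrho hcont]] := hb' b' ha'b'.
exists b; split => // c hc.
have hrpc := is_boundary_mapc hrho (hbdry _ (is_cycle_mapc hphi hc)).
have [d [hd hdc]] := contiguous_homologous (hK b) hcont hc.
by apply: is_boundary_homologous hd _ hrpc => t; rewrite hdc mapc_id mapc_comp.
Qed.

Theorem lemma4p2 (R : realType) (X Y : gpair)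
  (S : seq (pgrp X)) (T : seq (pgrp Y))
  (hS : generates S) (hT : generates T)
  (L C M : R)
  (f1 : pgrp X -> pgrp Y) (f2 : coset_vertex X -> coset_vertex Y)
  (hf : lip_pair S T L C M f1 f2) :
  (* (i) *)
  (forall alpha alpha' : nat, L * alpha%:R + C + M <= alpha'%:R ->
     simplicial (Rhat S alpha) (Rhat T alpha') (vmap f1 f2)) /\
  (* (ii) *)
  (forall (r1 : pgrp Y -> pgrp X) (r2 : coset_vertex Y -> coset_vertex X),
     lip_pair T S L C M r1 r2 ->
     quasi_retraction S T L C M f1 f2 r1 r2 ->
     (forall alpha alpha' beta beta' : nat,
        L * alpha%:R + C + M <= alpha'%:R ->
        (alpha' <= beta')%N ->
        L * beta'%:R + 2 * C + M <= beta%:R ->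
        simp_homotopic (Rhat S alpha) (Rhat S beta)
          (fun v => vmap r1 r2 (vmap f1 f2 v)) (fun v => v)) /\
     (forall i : nat, ess_trivial_H (Rhat T) i -> ess_trivial_H (Rhat S) i)).
Proof.
have [L1 C0 M0 _ _] := hf.
split=> [alpha alpha' | r1 r2 hr hq]; first exact: simplicial_vmap.
split=> [alpha alpha' beta beta' halpha hbeta' hbeta | i].
  apply: contiguous_simp_homotopic; first exact: Rhat_face_closed.
  exact (contiguous_retraction hS hq halpha hbeta' hbeta).
apply: (ess_trivial_H_retraction (phi := vmap f1 f2) (rho := vmap r1 r2)).
  exact: Rhat_face_closed.
move=> a; have [a' ha'] := exists_nat_ge (L * a%:R + C + M).
exists a'; split; first exact (simplicial_vmap hT hf ha').
move=> b' hb'; have [b hb] := exists_nat_ge (L * b'%:R + 2 * C + M).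
exists b; first exact (alpha_le_beta hq ha' hb' hb).
split; last exact (contiguous_retraction hS hq ha' hb' hb).
apply (simplicial_vmap hS hr); lra.
Qed.
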